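(* Fix an integer $k\ge 1$. For integers $a<b$ with $b-a\le k$, and $c<d$ with $d-c\le k$, write $\bar a,\bar b,\bar c,\bar d$ for the residues of $a,b,c,d$ modulo $k+1$. For every $u\in W^0$ the following hold, where $u\,\mathbf{t}_{ab}\mathbf{t}_{cd}$ means $(u\,\mathbf{t}_{ab})\,\mathbf{t}_{cd}$ and all operators written are assumed to have index differences between $1$ and $k$: (A) If $\bar a,\bar b,\bar c,\bar d$ are pairwise distinct, then $u\,\mathbf{t}_{ab}\mathbf{t}_{cd}=u\,\mathbf{t}_{cd}\mathbf{t}_{ab}$. (B1) If $a<c<b<d$, or if $b=c$ and $d-a>k+1$, then $u\,\mathbf{t}_{ab}\mathbf{t}_{cd}=u\,\mathbf{t}_{cd}\mathbf{t}_{ab}=0$. (B2) If ($\bar a=\bar c$ and $b\le d$) or ($\bar b=\bar d$ and $c\le a$), then $u\,\mathbf{t}_{ab}\mathbf{t}_{cd}=0$. (C1) If $a<b<d$ and $d-a=k+1$, then $u\,\mathbf{t}_{ab}\mathbf{t}_{bd}=u\,\mathbf{t}_{ab}\mathbf{t}_{b-k-1,a}$. (D) If $a<b<c<d$, $\bar b=\bar c$, $\bar d=\bar a$ and $(b-a)+(d-c)=k+1$, then $u\,\mathbf{t}_{ab}\mathbf{t}_{cd}=u\,\mathbf{t}_{d-k-1,c}\mathbf{t}_{b-k-1,a}$. (E1) If $a<b<c<d$ with $c-a\le k$ and $d-b\le k$, then $u\,\mathbf{t}_{bc}\mathbf{t}_{cd}\mathbf{t}_{ac}=u\,\mathbf{t}_{bd}\mathbf{t}_{ab}\mathbf{t}_{bc}$.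 (E2) If $a<b<c<d$ with $c-a\le k$ and $d-b\le k$, then $u\,\mathbf{t}_{ac}\mathbf{t}_{cd}\mathbf{t}_{bc}=u\,\mathbf{t}_{bc}\mathbf{t}_{ab}\mathbf{t}_{bd}$. (F) If $a<b<c$ and $c-a<k+1$, then $u\,\mathbf{t}_{bc}\mathbf{t}_{ab}\mathbf{t}_{bc}=u\,\mathbf{t}_{ab}\mathbf{t}_{bc}\mathbf{t}_{ab}=0$.
   Context: Fix an integer $k\ge1$. The affine symmetric group $W$ is the group of bijections $u:\mathbb Z\to\mathbb Z$ with $u(i+k+1)=u(i)+k+1$ for all $i$ and $u(1)+\cdots+u(k+1)=\binom{k+2}{2}$; the product is composition, $(uw)(i)=u(w(i))$. It is generated by $s_0,\dots,s_k$, where $s_i$ swaps $i+m(k+1)$ and $i+1+m(k+1)$ for all $m\in\mathbb Z$ and fixes everything else; $\ell(u)$ is the Coxeter length (minimal number of generators in an expression for $u$). For integers $a<b$ with $b-a\le k$, $t_{a,b}\in W$ is the element swapping $a+m(k+1)$ and $b+m(k+1)$ for all $m$ (so $(ut_{a,b})(a)=u(b)$). The set $W^0$ of affine $0$-grassmannian permutations consists of those $u\in W$ in which the values $1,2,\dots,k+1$ appear from left to right, i.e. $u^{-1}(1)<u^{-1}(2)<\cdots<u^{-1}(k+1)$. The operator $\mathbf{t}_{ab}$ on $\mathbb ZW$ acts on the right by $u\,\mathbf{t}_{ab}=u\,t_{a,b}$ if $\ell(ut_{a,b})=\ell(u)+1$ and $u(a)\le 0<u(b)$, and $u\,\mathbf{t}_{ab}=0$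 otherwise, extended linearly (with $0\,\mathbf{t}_{cd}=0$). (It is a known fact that $\ell(ut_{a,b})=\ell(u)+1$ iff $u(a)<u(b)$ and every $a<i<b$ has $u(i)<u(a)$ or $u(i)>u(b)$.) *)

From Stdlib Require Import ZArith List Classical ClassicalEpsilon FunctionalExtensionality.
Import ListNotations.
Open Scope Z_scope.

Definition gen (k i : Z) (j : Z) : Z :=
  if Z.eqb (j mod (k+1)) (i mod (k+1)) then j + 1
  else if Z.eqb (j mod (k+1)) ((i+1) mod (k+1)) then j - 1
  else j.

Definition tr (k a b : Z) (j : Z) : Z :=
  if Z.eqb (j mod (k+1)) (a mod (k+1)) then j + (b - a)
  else if Z.eqb (j mod (k+1)) (b mod (k+1)) then j - (b - a)
  else j.

Definition inW (k : Z) (u : Z -> Z) : Prop :=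
  (forall x y, u x = u y -> x = y) /\ (forall y, exists x, u x = y) /\
  (forall i, u (i + (k+1)) = u i + (k+1)) /\
  fold_right Z.add 0 (map (fun n : nat => u (Z.of_nat n)) (seq 1 (Z.to_nat (k+1))))
    = (k+2) * (k+1) / 2.

(* Affine 0-grassmannian permutations: u^{-1}(1) < ... < u^{-1}(k+1). *)
Definition inW0 (k : Z) (u : Z -> Z) : Prop :=
  inW k u /\
  (forall i j, 1 <= u i -> u j = u i + 1 -> u j <= k+1 -> i < j).

(* Product of a word s_{i1} ... s_{in}, with (uw)(i) = u(w(i)). *)
Definition word_prod (k : Z) (w : list Z) : Z -> Z :=
  fold_right (fun i f => fun j => gen k i (f j)) (fun j => j) w.

Definition valid_word (k : Z) (w : list Z) : Prop :=
  Forall (fun i => 0 <= i <= k) w.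

Definition has_length (k : Z) (u : Z -> Z) (n : nat) : Prop :=
  (exists w, valid_word k w /\ length w = n /\ word_prod k w = u) /\
  (forall w, valid_word k w -> word_prod k w = u -> (n <= length w)%nat).

Definition length_up (k a b : Z) (u : Z -> Z) : Prop :=
  exists n, has_length k u n /\ has_length k (fun j => u (tr k a b j)) (S n).

(* Elements of Z W of the form "a group element or 0" are represented by
   option (Z -> Z): Some u for u, None for 0. *)
Definition top_cond (k a b : Z) (u : Z -> Z) : Prop :=
  length_up k a b u /\ u a <= 0 < u b.

Definition top (k a b : Z) (x : option (Z -> Z)) : option (Z -> Z) :=
  match x with
  | None => None
  | Some u =>
      if excluded_middle_informative (top_cond k a b u)
      then Some (fun j => u (tr k a b j)) else None
  end.

Definition okd (k a b : Z) : Prop := 1 <= b - a <= k.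

Definition res (k a : Z) : Z := a mod (k+1).

(* Shi's inversion count [inv_count] changes by sgn (u (i+1) - u i) under u |-> u s_i and
   vanishes only at the identity, so it is the Coxeter length.  Writing
   t_{a,b} = s_a t_{a+1,b} s_a then gives l(u t_{a,b}) = l(u) + 1 iff u a < u b and no u i with
   a < i < b lies between them, so u t_{ab} is either u t_{a,b} or 0 according to the explicit
   condition [admissible u a b].  Each relation thus splits into an identity between products of
   transpositions and an equivalence between the admissibility conditions met along both sides;
   the latter is bookkeeping with residues mod k+1 and the periodicity of u, and only (B1) needs
   u to be grassmannian. *)

From Stdlib Require Import ZArith Lia List FinFun.
From Stdlib Require Import Classical ClassicalEpsilon FunctionalExtensionality.
Import ListNotations.
Open Scope Z_scope.

Lemma mod_eq_ex (n x y : Z) : 0 < n -> x mod n = y mod n -> exists m, x = y + m * n.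
Proof.
  intros Hn E. exists (x / n - y / n).
  pose proof (Z.div_mod x n ltac:(lia)). pose proof (Z.div_mod y n ltac:(lia)). nia.
Qed.

Lemma mod_neq_of_dist (n x y : Z) : 0 < Z.abs (x - y) < n -> x mod n <> y mod n.
Proof.
  intros Hd E. destruct (mod_eq_ex n x y ltac:(lia) E) as [m Hm].
  assert (m <= -1 \/ m = 0 \/ 1 <= m) as [|[|]] by lia; nia.
Qed.

Lemma mod_neq_shift (n x y m : Z) : 0 < Z.abs (x - m * n - y) < n -> x mod n <> y mod n.
Proof.
  intros Hd. replace x with (x - m * n + m * n) by ring.
  rewrite Z_mod_plus_full. apply mod_neq_of_dist; lia.
Qed.

Lemma mod_eq_shift (n x y m : Z) : x = y + m * n -> x mod n = y mod n.
Proof. intros ->. apply Z_mod_plus_full. Qed.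

Lemma mod_neq_add (n x y m : Z) : x mod n <> y mod n -> x + m * n <> y.
Proof. intros H E. subst y. rewrite Z_mod_plus_full in H. auto. Qed.

Fixpoint zsum (f : Z -> Z) (m : Z) (c : nat) : Z :=
  match c with O => 0 | S c' => f m + zsum f (m + 1) c' end.

Lemma zsum_ext (f g : Z -> Z) (c : nat) (m : Z) :
  (forall j, m <= j < m + Z.of_nat c -> f j = g j) -> zsum f m c = zsum g m c.
Proof.
  revert m; induction c as [|c IH]; intros m H; simpl; auto.
  rewrite H by lia. rewrite (IH (m + 1)); [reflexivity|]. intros; apply H; lia.
Qed.

Lemma zsum_app (f : Z -> Z) (c1 c2 : nat) (m : Z) :
  zsum f m (c1 + c2) = zsum f m c1 + zsum f (m + Z.of_nat c1) c2.
Proof.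
  revert m; induction c1 as [|c1 IH]; intros m; simpl.
  - rewrite Z.add_0_r. ring.
  - rewrite IH. replace (m + 1 + Z.of_nat c1) with (m + Z.pos (Pos.of_succ_nat c1)) by lia. ring.
Qed.

Lemma zsum_snoc (f : Z -> Z) (c : nat) (m : Z) : zsum f m (S c) = zsum f m c + f (m + Z.of_nat c).
Proof.
  rewrite <- Nat.add_1_r, zsum_app. simpl. ring.
Qed.

Lemma zsum_nonneg (f : Z -> Z) (c : nat) (m : Z) :
  (forall j, m <= j < m + Z.of_nat c -> 0 <= f j) -> 0 <= zsum f m c.
Proof.
  revert m; induction c as [|c IH]; intros m H; simpl; [lia|].
  pose proof (IH (m + 1) ltac:(intros; apply H; lia)). pose proof (H m ltac:(lia)). lia.
Qed.

Lemma zsum_nonpos (f : Z -> Z) (c : nat) (m : Z) :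
  (forall j, m <= j < m + Z.of_nat c -> f j <= 0) -> zsum f m c <= 0.
Proof.
  revert m; induction c as [|c IH]; intros m H; simpl; [lia|].
  pose proof (IH (m + 1) ltac:(intros; apply H; lia)). pose proof (H m ltac:(lia)). lia.
Qed.

Lemma zsum_eq0 (f : Z -> Z) (c : nat) (m : Z) :
  (forall j, m <= j < m + Z.of_nat c -> f j = 0) -> zsum f m c = 0.
Proof.
  revert m; induction c as [|c IH]; intros m H; simpl; [lia|].
  pose proof (IH (m + 1) ltac:(intros; apply H; lia)). pose proof (H m ltac:(lia)). lia.
Qed.

Lemma zsum_eq0_nonneg (f : Z -> Z) (c : nat) (m : Z) :
  (forall j, m <= j < m + Z.of_nat c -> 0 <= f j) -> zsum f m c = 0 ->
  forall j, m <= j < m + Z.of_nat c -> f j = 0.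
Proof.
  revert m; induction c as [|c IH]; intros m H E j Hj; simpl in *; [lia|].
  pose proof (zsum_nonneg f c (m + 1) ltac:(intros; apply H; lia)).
  pose proof (H m ltac:(lia)).
  destruct (Z.eq_dec j m) as [->|]; [lia|].
  apply (IH (m + 1)); try lia. intros; apply H; lia.
Qed.

Lemma zsum_add_const (f : Z -> Z) (x : Z) (c : nat) (m : Z) :
  zsum (fun j => f j + x) m c = zsum f m c + Z.of_nat c * x.
Proof.
  revert m; induction c as [|c IH]; intros m; simpl zsum; [lia|].
  rewrite IH, Nat2Z.inj_succ. ring.
Qed.

Lemma zsum_id (c : nat) (m : Z) : 2 * zsum (fun j => j) m c = Z.of_nat c * (2 * m + Z.of_nat c - 1).
Proof.
  revert m; induction c as [|c IH]; intros m; simpl zsum; [lia|].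
  rewrite Z.mul_add_distr_l, IH, Nat2Z.inj_succ. nia.
Qed.

Lemma fold_map_seq_zsum (u : Z -> Z) (c s : nat) :
  fold_right Z.add 0 (map (fun i : nat => u (Z.of_nat i)) (seq s c)) = zsum u (Z.of_nat s) c.
Proof.
  revert s; induction c as [|c IH]; intros s; simpl; auto.
  now rewrite IH, Nat2Z.inj_succ.
Qed.

Fixpoint pair_sum (h : Z -> Z -> Z) (lo : Z) (c : nat) : Z :=
  match c with O => 0 | S c' => zsum (h lo) (lo + 1) c' + pair_sum h (lo + 1) c' end.

Lemma pair_sum_snoc (h : Z -> Z -> Z) (c : nat) (lo : Z) :
  pair_sum h lo (S c) = pair_sum h lo c + zsum (fun p => h p (lo + Z.of_nat c)) lo c.
Proof.
  revert lo; induction c as [|c IH]; intros lo; [simpl; ring|].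
  change (pair_sum h lo (S (S c))) with (zsum (h lo) (lo + 1) (S c) + pair_sum h (lo + 1) (S c)).
  rewrite IH, zsum_snoc. simpl pair_sum. simpl zsum.
  replace (lo + Z.pos (Pos.of_succ_nat c)) with (lo + 1 + Z.of_nat c) by lia. ring.
Qed.

Lemma pair_sum_ext (h h' : Z -> Z -> Z) (c : nat) (lo : Z) :
  (forall p q, lo <= p -> p < q -> q < lo + Z.of_nat c -> h p q = h' p q) ->
  pair_sum h lo c = pair_sum h' lo c.
Proof.
  revert lo; induction c as [|c IH]; intros lo H; simpl; auto.
  rewrite (zsum_ext (h lo) (h' lo)), IH; auto; intros; apply H; lia.
Qed.

Lemma pair_sum_nonneg (h : Z -> Z -> Z) (c : nat) (lo : Z) :
  (forall p q, 0 <= h p q) -> 0 <= pair_sum h lo c.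
Proof.
  revert lo; induction c as [|c IH]; intros lo H; simpl; [lia|].
  pose proof (zsum_nonneg (h lo) c (lo + 1) (fun j _ => H lo j)). pose proof (IH (lo + 1) H). lia.
Qed.

Lemma pair_sum_eq0 (h : Z -> Z -> Z) (c : nat) (lo : Z) :
  (forall p q, lo <= p -> p < q -> q < lo + Z.of_nat c -> h p q = 0) -> pair_sum h lo c = 0.
Proof.
  revert lo; induction c as [|c IH]; intros lo H; simpl; auto.
  rewrite zsum_eq0, IH; auto; intros; apply H; lia.
Qed.

Definition periodic (k : Z) (u : Z -> Z) : Prop := forall i, u (i + (k + 1)) = u i + (k + 1).

(* Shi: the number of inversions (i, j), 1 <= i <= k+1, i < j, u i > u j, of an affine
   permutation u is sum_{1 <= p < q <= k+1} |floor ((u q - u p) / (k+1))|. *)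
Definition inv_weight (k : Z) (u : Z -> Z) (p q : Z) : Z := Z.abs ((u q - u p) / (k + 1)).

Definition inv_count (k : Z) (u : Z -> Z) : Z := pair_sum (inv_weight k u) 1 (Z.to_nat (k + 1)).

(* Together with [u a < u b], the condition l(u t_{a,b}) = l(u) + 1 ([inv_count_up_iff]). *)
Definition no_value_between (u : Z -> Z) (a b : Z) : Prop :=
  forall i, a < i < b -> u i < u a \/ u b < u i.

Definition admissible (u : Z -> Z) (a b : Z) : Prop := u a <= 0 < u b /\ no_value_between u a b.

Section AffinePermutations.

Variable k : Z.
Hypothesis Hk : 1 <= k.

Lemma okd_mod_neq (a b : Z) : okd k a b -> b mod (k+1) <> a mod (k+1).
Proof. unfold okd. intros. apply mod_neq_of_dist. lia. Qed.

Lemma tr_res_a (a b j : Z) : j mod (k+1) = a mod (k+1) -> tr k a b j = j + (b - a).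
Proof. intros E. unfold tr. rewrite E, Z.eqb_refl. reflexivity. Qed.

Lemma tr_res_b (a b j : Z) : okd k a b -> j mod (k+1) = b mod (k+1) -> tr k a b j = j - (b - a).
Proof.
  intros Hd E. unfold tr. rewrite E.
  destruct (Z.eqb_spec (b mod (k+1)) (a mod (k+1))) as [F|_].
  - now destruct (okd_mod_neq a b Hd).
  - now rewrite Z.eqb_refl.
Qed.

Lemma tr_res_other (a b j : Z) :
  j mod (k+1) <> a mod (k+1) -> j mod (k+1) <> b mod (k+1) -> tr k a b j = j.
Proof.
  intros Ea Eb. unfold tr.
  destruct (Z.eqb_spec (j mod (k+1)) (a mod (k+1))); [contradiction|].
  destruct (Z.eqb_spec (j mod (k+1)) (b mod (k+1))); [contradiction|reflexivity].
Qed.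

Lemma tr_at_a (a b : Z) : tr k a b a = b.
Proof. rewrite tr_res_a; [ring|reflexivity]. Qed.

Lemma tr_at_b (a b : Z) : okd k a b -> tr k a b b = a.
Proof. intros Hd. rewrite tr_res_b; [ring|assumption|reflexivity]. Qed.

Lemma tr_in_window (a b j : Z) : okd k a b -> a < j <= a + k -> j <> b -> tr k a b j = j.
Proof.
  unfold okd. intros Hd Hj Hb. apply tr_res_other; apply mod_neq_of_dist; lia.
Qed.

Lemma tr_shift (a b j m : Z) : tr k a b (j + m * (k+1)) = tr k a b j + m * (k+1).
Proof.
  unfold tr. rewrite Z_mod_plus_full.
  destruct (_ =? _); [lia|]. destruct (_ =? _); lia.
Qed.

Lemma tr_involutive (a b j : Z) : okd k a b -> tr k a b (tr k a b j) = j.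
Proof.
  intros Hd.
  destruct (Z.eq_dec (j mod (k+1)) (a mod (k+1))) as [E|Ea];
    [|destruct (Z.eq_dec (j mod (k+1)) (b mod (k+1))) as [E|Eb]];
    try (destruct (mod_eq_ex (k+1) _ _ ltac:(lia) E) as [m ->]).
  - rewrite tr_shift, tr_at_a, tr_shift, tr_at_b; auto.
  - rewrite tr_shift, tr_at_b, tr_shift, tr_at_a; auto.
  - rewrite (tr_res_other a b j); auto. now rewrite tr_res_other.
Qed.

Ltac okd_tac := first [assumption | unfold okd in *; lia].

Ltac res_neq_by m := apply (mod_neq_shift _ _ _ m); unfold okd in *; lia.
Ltac res_eq_by m := apply (mod_eq_shift _ _ _ m); unfold okd in *; lia.

(* The points compared below are less than 3(k+1) apart, so shifts by at most 2(k+1) suffice. *)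
Ltac res_neq :=
  first [ assumption | apply not_eq_sym; assumption
        | rewrite Z_mod_plus_full; first [assumption | apply not_eq_sym; assumption]
        | res_neq_by 0 | res_neq_by 1 | res_neq_by (-1) | res_neq_by 2 | res_neq_by (-2) ].

Ltac res_eq :=
  first [ rewrite ?Z_mod_plus_full; reflexivity
        | res_eq_by 0 | res_eq_by 1 | res_eq_by (-1) | res_eq_by 2 | res_eq_by (-2) ].

Ltac tr_simpl :=
  repeat match goal with
  | |- context [tr k ?x ?y ?x] => rewrite (tr_at_a x y)
  | |- context [tr k ?x ?y ?y] => rewrite (tr_at_b x y) by okd_tac
  | |- context [tr k ?x ?y (?z + ?m * (k+1))] => rewrite (tr_shift x y z m)
  | |- context [tr k ?x ?y ?z] => rewrite (tr_res_a x y z) by res_eq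
  | |- context [tr k ?x ?y ?z] => rewrite (tr_res_b x y z) by first [okd_tac | res_eq]
  | |- context [tr k ?x ?y ?z] => rewrite (tr_res_other x y z) by res_neq
  end.

Ltac tr_simpl_in H := revert H; tr_simpl; intros H.

Ltac res_case j x :=
  let E := fresh "E" in let m := fresh "m" in
  destruct (Z.eq_dec (j mod (k+1)) (x mod (k+1))) as [E|?];
  [destruct (mod_eq_ex (k+1) _ _ ltac:(lia) E) as [m ->]; tr_simpl; ring|].

Lemma tr_split (a b j : Z) : 2 <= b - a <= k ->
  tr k a b j = tr k a (a+1) (tr k (a+1) b (tr k a (a+1) j)).
Proof.
  intros Hab. res_case j a. res_case j (a+1). res_case j b. tr_simpl. reflexivity.
Qed.

Lemma tr_congr (a b a' b' : Z) :
  a mod (k+1) = a' mod (k+1) -> b mod (k+1) = b' mod (k+1) -> b - a = b' - a' ->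
  forall j, tr k a b j = tr k a' b' j.
Proof. intros Ea Eb Ed j. unfold tr. now rewrite Ea, Eb, Ed. Qed.

Lemma periodic_mul (u : Z -> Z) : periodic k u -> forall m i, u (i + m * (k+1)) = u i + m * (k+1).
Proof.
  intros P m. induction m as [|m IH|m IH] using Z.peano_ind; intros i.
  - now rewrite !Z.mul_0_l, !Z.add_0_r.
  - replace (i + Z.succ m * (k+1)) with (i + m * (k+1) + (k+1)) by ring.
    rewrite P, IH. ring.
  - pose proof (P (i + Z.pred m * (k+1))) as H.
    replace (i + Z.pred m * (k+1) + (k+1)) with (i + m * (k+1)) in H by lia.
    rewrite IH in H. lia.
Qed.

Lemma periodic_tr (a b : Z) (u : Z -> Z) : periodic k u -> periodic k (fun j => u (tr k a b j)).
Proof.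
  intros P i. pose proof (tr_shift a b i 1). rewrite !Z.mul_1_l in H. cbv beta. now rewrite H, P.
Qed.

Lemma injective_tr (a b : Z) (u : Z -> Z) :
  okd k a b -> Injective u -> Injective (fun j => u (tr k a b j)).
Proof.
  intros Hd I x y E. apply I in E.
  now rewrite <- (tr_involutive a b x), <- (tr_involutive a b y), E.
Qed.

Lemma inW_periodic (u : Z -> Z) : inW k u -> periodic k u.
Proof. intros (_ & _ & P & _). exact P. Qed.

Lemma inW_injective (u : Z -> Z) : inW k u -> Injective u.
Proof. intros (I & _). exact I. Qed.

Lemma periodic_res_neq (u : Z -> Z) (p q : Z) : periodic k u -> Injective u ->
  p mod (k+1) <> q mod (k+1) -> (u q - u p) mod (k+1) <> 0.
Proof.
  intros P I Hpq E. apply Hpq.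
  pose proof (Z.div_mod (u q - u p) (k+1) ltac:(lia)) as D. rewrite E in D.
  assert (Q : u q = u (p + (u q - u p) / (k+1) * (k+1))) by (rewrite periodic_mul; auto; lia).
  apply I in Q. rewrite Q, Z_mod_plus_full. reflexivity.
Qed.

Lemma zsum_window_shift (u : Z -> Z) (m : Z) : periodic k u ->
  zsum u m (Z.to_nat (k+1)) = zsum u 1 (Z.to_nat (k+1)) + (m - 1) * (k+1).
Proof.
  intros P.
  assert (Step : forall m, zsum u (m + 1) (Z.to_nat (k+1)) = zsum u m (Z.to_nat (k+1)) + (k+1)).
  { intros m'. replace (Z.to_nat (k+1)) with (S (Z.to_nat k)) by lia.
    rewrite zsum_snoc. simpl zsum. rewrite Z2Nat.id by lia.
    replace (m' + 1 + k) with (m' + (k+1)) by ring. rewrite P. ring. }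
  induction m as [|m IH|m IH] using Z.peano_ind.
  - specialize (Step 0). simpl in Step. lia.
  - rewrite <- Z.add_1_r, Step, IH. ring.
  - specialize (Step (Z.pred m)). replace (Z.pred m + 1) with m in Step by lia. lia.
Qed.

Lemma zsum_window_swap (f f' : Z -> Z) (a b : Z) : okd k a b ->
  f' a = f b -> f' b = f a -> (forall j, a < j <= a + k -> j <> b -> f' j = f j) ->
  zsum f' a (Z.to_nat (k+1)) = zsum f a (Z.to_nat (k+1)).
Proof.
  unfold okd. intros Hd Ha Hb Ho.
  replace (Z.to_nat (k+1)) with (S (Z.to_nat (b - a - 1) + S (Z.to_nat (k - (b - a))))) by lia.
  simpl zsum. rewrite !zsum_app. simpl zsum. rewrite Z2Nat.id by lia.
  replace (a + 1 + (b - a - 1)) with b by ring.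
  rewrite Ha, Hb, (zsum_ext f' f (Z.to_nat (b - a - 1))), (zsum_ext f' f (Z.to_nat (k - (b - a)))).
  - ring.
  - intros j Hj. rewrite Z2Nat.id in Hj by lia. apply Ho; lia.
  - intros j Hj. rewrite Z2Nat.id in Hj by lia. apply Ho; lia.
Qed.

Lemma inW_tr (a b : Z) (u : Z -> Z) : okd k a b -> inW k u -> inW k (fun j => u (tr k a b j)).
Proof.
  intros Hd Hu. destruct Hu as (I & Surj & P & Sum). split; [|split; [|split]].
  - now apply injective_tr.
  - intros y. destruct (Surj y) as [x Hx]. exists (tr k a b x). now rewrite tr_involutive.
  - now apply periodic_tr.
  - rewrite (fold_map_seq_zsum (fun j => u (tr k a b j))), fold_map_seq_zsum in *.
    simpl Z.of_nat in *. rewrite <- Sum.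
    pose proof (zsum_window_shift _ a (periodic_tr a b u P)) as E1.
    pose proof (zsum_window_shift u a P) as E2.
    enough (zsum (fun j => u (tr k a b j)) a (Z.to_nat (k+1)) = zsum u a (Z.to_nat (k+1))) by lia.
    apply zsum_window_swap with b; auto.
    + now rewrite tr_at_a.
    + now rewrite tr_at_b.
    + intros. now rewrite tr_in_window.
Qed.

Lemma inW_tr2 (a1 b1 a2 b2 : Z) (u : Z -> Z) : okd k a1 b1 -> okd k a2 b2 -> inW k u ->
  inW k (fun j => u (tr k a1 b1 (tr k a2 b2 j))).
Proof. intros. apply (inW_tr a2 b2 (fun j => u (tr k a1 b1 j))); auto using inW_tr. Qed.

Lemma abs_div_opp (x : Z) : x mod (k+1) <> 0 ->
  Z.abs (- x / (k+1)) = Z.abs (x / (k+1)) + Z.sgn x.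
Proof.
  intros H. rewrite Z_div_nz_opp_full by lia.
  pose proof (Z.div_mod x (k+1) ltac:(lia)). pose proof (Z.mod_pos_bound x (k+1) ltac:(lia)).
  destruct (Z_lt_le_dec 0 x).
  - rewrite Z.sgn_pos by lia. assert (0 <= x / (k+1)) by nia. lia.
  - assert (x <> 0) by (intros ->; apply H, Z.mod_0_l; lia).
    rewrite Z.sgn_neg by lia. assert (x / (k+1) < 0) by nia. lia.
Qed.

Lemma inv_weight_wrap (u : Z -> Z) (p q : Z) : periodic k u -> Injective u -> p < q < p + (k+1) ->
  inv_weight k u p q = inv_weight k u q (p + (k+1)).
Proof.
  intros P I H. unfold inv_weight. rewrite P.
  assert ((u q - u p) mod (k+1) <> 0) by (apply periodic_res_neq; auto; apply mod_neq_of_dist; lia).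
  replace (u p + (k+1) - u q) with (- (u q - u p) + 1 * (k+1)) by ring.
  rewrite Z_div_plus_full, Z_div_nz_opp_full by lia. lia.
Qed.

Lemma inv_count_window (u : Z -> Z) (m : Z) : periodic k u -> Injective u ->
  pair_sum (inv_weight k u) m (Z.to_nat (k+1)) = inv_count k u.
Proof.
  intros P I.
  assert (Step : forall m, pair_sum (inv_weight k u) m (Z.to_nat (k+1))
                         = pair_sum (inv_weight k u) (m + 1) (Z.to_nat (k+1))).
  { intros m'. replace (Z.to_nat (k+1)) with (S (Z.to_nat k)) by lia.
    simpl pair_sum at 1. rewrite pair_sum_snoc, Z2Nat.id by lia.
    rewrite (zsum_ext (inv_weight k u m') (fun p => inv_weight k u p (m' + 1 + k))); [ring|].
    intros j Hj. rewrite Z2Nat.id in Hj by lia. rewrite inv_weight_wrap by (auto; lia).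
    f_equal; ring. }
  unfold inv_count. induction m as [|m IH|m IH] using Z.peano_ind.
  - apply Step.
  - now rewrite <- IH, (Step m), Z.add_1_r.
  - rewrite <- IH, (Step (Z.pred m)). f_equal. lia.
Qed.

Lemma inv_count_nonneg (u : Z -> Z) : 0 <= inv_count k u.
Proof. apply pair_sum_nonneg. intros. unfold inv_weight. lia. Qed.

Lemma okd_succ (i : Z) : okd k i (i + 1).
Proof. unfold okd. lia. Qed.

Lemma inv_count_mul_s (u : Z -> Z) (i : Z) : periodic k u -> Injective u ->
  inv_count k (fun j => u (tr k i (i+1) j)) = inv_count k u + Z.sgn (u (i+1) - u i).
Proof.
  intros P I. pose proof (okd_succ i) as Hd.
  set (v := fun j => u (tr k i (i+1) j)).
  rewrite <- (inv_count_window v i (periodic_tr _ _ _ P) (injective_tr _ _ _ Hd I)),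
          <- (inv_count_window u i P I).
  replace (Z.to_nat (k+1)) with (S (S (Z.to_nat (k-1)))) by lia. simpl pair_sum.
  assert (Vi : v i = u (i+1)) by (unfold v; now rewrite tr_at_a).
  assert (Vi1 : v (i+1) = u i) by (unfold v; now rewrite tr_at_b).
  assert (Vo : forall q, i + 1 < q <= i + k -> v q = u q)
    by (intros; unfold v; rewrite tr_in_window; auto; lia).
  rewrite (zsum_ext (inv_weight k v i) (inv_weight k u (i+1))),
          (zsum_ext (inv_weight k v (i+1)) (inv_weight k u i)),
          (pair_sum_ext (inv_weight k v) (inv_weight k u)).
  - unfold inv_weight. rewrite Vi, Vi1.
    replace (u i - u (i+1)) with (- (u (i+1) - u i)) by ring.
    rewrite abs_div_opp; [ring|]. apply periodic_res_neq; auto. apply mod_neq_of_dist. lia.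
  - intros p q Hp Hpq Hq. unfold inv_weight. rewrite !Vo by lia. reflexivity.
  - intros q Hq. unfold inv_weight. rewrite Vo, Vi1 by lia. reflexivity.
  - intros q Hq. unfold inv_weight. rewrite Vo, Vi by lia. reflexivity.
Qed.

Lemma window_decomp (w0 i : Z) : exists r m, w0 <= r < w0 + (k+1) /\ i = r + m * (k+1).
Proof.
  exists (w0 + (i - w0) mod (k+1)), ((i - w0) / (k+1)).
  pose proof (Z.div_mod (i - w0) (k+1) ltac:(lia)).
  pose proof (Z.mod_pos_bound (i - w0) (k+1) ltac:(lia)).
  lia.
Qed.

Lemma word_prod_snoc (w : list Z) (i : Z) :
  word_prod k (w ++ [i]) = fun j => word_prod k w (tr k i (i+1) j).
Proof.
  apply functional_extensionality. intros j. induction w as [|x w IH]; simpl.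
  - unfold gen, tr. now replace (i + 1 - i) with 1 by ring.
  - now rewrite IH.
Qed.

Lemma word_prod_periodic_injective (w : list Z) :
  periodic k (word_prod k w) /\ Injective (word_prod k w).
Proof.
  induction w as [|i w IH] using rev_ind.
  - split; intro; intros; auto.
  - rewrite word_prod_snoc. destruct IH as [P I].
    split; [now apply periodic_tr | apply injective_tr; auto using okd_succ].
Qed.

Lemma inv_count_word_le (w : list Z) : inv_count k (word_prod k w) <= Z.of_nat (length w).
Proof.
  induction w as [|i w IH] using rev_ind.
  - unfold inv_count. rewrite pair_sum_eq0; [simpl; lia|].
    intros p q Hp Hpq Hq. unfold inv_weight. simpl. rewrite Z.div_small; lia.
  - rewrite word_prod_snoc. destruct (word_prod_periodic_injective w) as [P I].
    rewrite inv_count_mul_s, length_app, Nat2Z.inj_add by auto. simpl Z.of_nat.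
    pose proof (Z.sgn_spec (word_prod k w (i+1) - word_prod k w i)). lia.
Qed.

Lemma increasing_window (u : Z -> Z) : periodic k u -> (forall i, u i < u (i+1)) ->
  forall j, 1 <= j <= k+1 -> u j = u 1 + (j - 1).
Proof.
  intros P H j Hj.
  assert (Mono : forall (d : nat) x, u x + Z.of_nat d <= u (x + Z.of_nat d)).
  { induction d as [|d IH]; intros x; [simpl; rewrite !Z.add_0_r; lia|].
    specialize (IH x). specialize (H (x + Z.of_nat d)).
    replace (x + Z.of_nat (S d)) with (x + Z.of_nat d + 1) by lia. lia. }
  pose proof (Mono (Z.to_nat (j - 1)) 1) as M1. pose proof (Mono (Z.to_nat (k + 2 - j)) j) as M2.
  rewrite Z2Nat.id in M1, M2 by lia.
  replace (j + (k + 2 - j)) with (1 + (k+1)) in M2 by ring. rewrite P in M2.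
  replace (1 + (j - 1)) with j in M1 by ring. lia.
Qed.

Lemma inv_count_pos_descent (u : Z -> Z) : periodic k u -> Injective u -> 0 < inv_count k u ->
  exists i, 0 <= i <= k /\ u (i+1) < u i.
Proof.
  intros P I Hpos. apply NNPP. intros Hno.
  assert (Incr : forall i, u i < u (i+1)).
  { intros i. destruct (window_decomp 0 i) as (r & m & Hr & ->).
    replace (r + m * (k+1) + 1) with (r + 1 + m * (k+1)) by ring. rewrite !periodic_mul by auto.
    destruct (Z.lt_total (u r) (u (r+1))) as [|[E|]]; [lia| apply I in E; lia |].
    exfalso. apply Hno. exists r. split; [lia|assumption]. }
  enough (inv_count k u = 0) by lia.
  apply pair_sum_eq0. intros p q Hp Hpq Hq. unfold inv_weight.
  rewrite (increasing_window u P Incr p), (increasing_window u P Incr q) by lia.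
  rewrite Z.div_small; lia.
Qed.

Lemma inv_count_eq0_id (u : Z -> Z) : inW k u -> inv_count k u = 0 -> u = fun j => j.
Proof.
  intros (I & _ & P & Sum) H0.
  assert (Incr : forall i, u i < u (i+1)).
  { intros i. destruct (Z.lt_total (u i) (u (i+1))) as [|[E|E]]; auto.
    - apply I in E. lia.
    - pose proof (inv_count_mul_s u i P I) as E'. rewrite H0, Z.sgn_neg in E' by lia.
      pose proof (inv_count_nonneg (fun j => u (tr k i (i+1) j))). lia. }
  pose proof (increasing_window u P Incr) as W.
  assert (U1 : u 1 = 1).
  { rewrite fold_map_seq_zsum in Sum. simpl Z.of_nat in Sum.
    rewrite (zsum_ext u (fun j => j + (u 1 - 1))), zsum_add_const in Sum
      by (intros j Hj; rewrite W; lia).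
    pose proof (zsum_id (Z.to_nat (k+1)) 1). rewrite Z2Nat.id in * by lia.
    replace ((k+2) * (k+1)) with (zsum (fun j => j) 1 (Z.to_nat (k+1)) * 2) in Sum by lia.
    rewrite Z.div_mul in Sum by lia. nia. }
  apply functional_extensionality. intros j.
  destruct (window_decomp 1 j) as (r & m & Hr & ->).
  rewrite periodic_mul, W by (auto; lia). lia.
Qed.

Lemma word_of_inv_count (n : nat) (u : Z -> Z) : inW k u -> Z.to_nat (inv_count k u) = n ->
  exists w, valid_word k w /\ length w = n /\ word_prod k w = u.
Proof.
  revert u; induction n as [|n IH]; intros u Hu Hn.
  - exists []. split; [constructor|split; [reflexivity|]].
    pose proof (inv_count_nonneg u). symmetry. apply inv_count_eq0_id; auto; lia.
  - pose proof (inW_periodic u Hu) as P. pose proof (inW_injective u Hu) as I.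
    destruct (inv_count_pos_descent u P I ltac:(lia)) as (i & Hi & Hdes).
    set (v := fun j => u (tr k i (i+1) j)).
    assert (Hv : inW k v) by (apply inW_tr; auto using okd_succ).
    assert (Hvn : Z.to_nat (inv_count k v) = n)
      by (unfold v; rewrite inv_count_mul_s, Z.sgn_neg by (auto; lia); lia).
    destruct (IH v Hv Hvn) as (w & Vw & Lw & Ew).
    exists (w ++ [i]). split; [|split].
    + apply Forall_app. split; auto.
    + rewrite length_app. simpl. lia.
    + rewrite word_prod_snoc, Ew. apply functional_extensionality. intros j.
      unfold v. now rewrite tr_involutive by apply okd_succ.
Qed.

Lemma has_length_inv_count (u : Z -> Z) : inW k u -> has_length k u (Z.to_nat (inv_count k u)).
Proof.
  intros Hu. split.
  - now apply word_of_inv_count.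
  - intros w _ E. pose proof (inv_count_word_le w). rewrite E in H. lia.
Qed.

Lemma has_length_unique (u : Z -> Z) (n m : nat) : has_length k u n -> has_length k u m -> n = m.
Proof.
  intros [(w1 & V1 & L1 & E1) M1] [(w2 & V2 & L2 & E2) M2].
  specialize (M1 w2 V2 E2). specialize (M2 w1 V1 E1). lia.
Qed.

Lemma length_up_iff (a b : Z) (u : Z -> Z) : okd k a b -> inW k u ->
  length_up k a b u <-> inv_count k (fun j => u (tr k a b j)) = inv_count k u + 1.
Proof.
  intros Hd Hu. pose proof (inW_tr a b u Hd Hu) as Hv.
  pose proof (inv_count_nonneg u). pose proof (inv_count_nonneg (fun j => u (tr k a b j))).
  split.
  - intros (n & H1 & H2).
    pose proof (has_length_unique _ _ _ H1 (has_length_inv_count u Hu)).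
    pose proof (has_length_unique _ _ _ H2 (has_length_inv_count _ Hv)). lia.
  - intros E. exists (Z.to_nat (inv_count k u)). split; [now apply has_length_inv_count|].
    replace (S (Z.to_nat (inv_count k u)))
      with (Z.to_nat (inv_count k (fun j => u (tr k a b j)))) by lia.
    now apply has_length_inv_count.
Qed.

Lemma inv_count_mul_tr (u : Z -> Z) (a b : Z) : periodic k u -> Injective u -> okd k a b ->
  inv_count k (fun j => u (tr k a b j)) = inv_count k u + Z.sgn (u b - u a)
    + zsum (fun i => Z.sgn (u b - u i) + Z.sgn (u i - u a)) (a+1) (Z.to_nat (b - a - 1)).
Proof.
  remember (Z.to_nat (b - a - 1)) as n eqn:En. revert u a En.
  induction n as [|n IH]; intros u a En P I Hd.
  - assert (b = a + 1) as -> by (unfold okd in Hd; lia).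
    rewrite inv_count_mul_s by auto. simpl. ring.
  - (* t_{a,b} = s_a t_{a+1,b} s_a, and s_a only swaps the values at a and a+1 *)
    set (v := fun j => u (tr k a (a+1) j)).
    assert (Hd' : okd k (a+1) b) by okd_tac.
    assert (Pv : periodic k v) by now apply periodic_tr.
    assert (Iv : Injective v) by (apply injective_tr; auto using okd_succ).
    assert (Vo : forall i, a + 1 < i <= a + k -> v i = u i)
      by (intros; unfold v; rewrite tr_in_window; auto using okd_succ; lia).
    assert (Va : v a = u (a+1)) by (unfold v; now rewrite tr_at_a).
    assert (Va1 : v (a+1) = u a) by (unfold v; now rewrite tr_at_b by apply okd_succ).
    assert (Vb : v b = u b) by (apply Vo; okd_tac).
    replace (fun j => u (tr k a b j)) with (fun j => v (tr k (a+1) b (tr k a (a+1) j)))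
      by (apply functional_extensionality; intros j; unfold v;
          rewrite <- tr_split; okd_tac || reflexivity).
    rewrite (inv_count_mul_s (fun j => v (tr k (a+1) b j)) a)
      by auto using periodic_tr, injective_tr.
    rewrite IH by (auto; lia).
    unfold v at 1. rewrite inv_count_mul_s by auto. fold v.
    rewrite (tr_at_a (a+1) b), (tr_res_other (a+1) b a) by res_neq.
    cbv beta. fold v. rewrite Vb, Va, Va1. simpl zsum.
    rewrite (zsum_ext (fun i => Z.sgn (u b - v i) + Z.sgn (v i - u a))
                      (fun i => Z.sgn (u b - u i) + Z.sgn (u i - u a))); [ring|].
    intros j Hj. rewrite Vo; [reflexivity|]. unfold okd in Hd. lia.
Qed.

Lemma inv_count_up_iff (u : Z -> Z) (a b : Z) : periodic k u -> Injective u -> okd k a b ->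
  inv_count k (fun j => u (tr k a b j)) = inv_count k u + 1 <-> u a < u b /\ no_value_between u a b.
Proof.
  intros P I Hd. rewrite inv_count_mul_tr by auto. unfold okd in Hd.
  set (F := fun i => Z.sgn (u b - u i) + Z.sgn (u i - u a)).
  assert (Hne : forall i, a < i < b -> u i <> u a /\ u i <> u b)
    by (intros i Hi; split; intros E; apply I in E; lia).
  assert (Hab : u a <> u b) by (intros E; apply I in E; lia).
  assert (Fspec : forall i, a < i < b ->
    (u a < u b -> 0 <= F i /\ (F i = 0 <-> u i < u a \/ u b < u i)) /\ (u b < u a -> F i <= 0)).
  { intros i Hi. destruct (Hne i Hi). unfold F.
    pose proof (Z.sgn_spec (u b - u i)). pose proof (Z.sgn_spec (u i - u a)). lia. }
  assert (Range : forall j, a + 1 <= j < a + 1 + Z.of_nat (Z.to_nat (b - a - 1)) -> a < j < b)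
    by (intros j; rewrite Z2Nat.id by lia; lia).
  destruct (Z_lt_le_dec (u a) (u b)) as [Lt|Ge].
  - rewrite Z.sgn_pos by lia.
    assert (Nn : forall j, a + 1 <= j < a + 1 + Z.of_nat (Z.to_nat (b - a - 1)) -> 0 <= F j)
      by (intros j Hj; apply (proj1 (Fspec j (Range j Hj)) Lt)).
    split.
    + intros E. split; [assumption|]. intros i Hi.
      apply (proj1 (Fspec i Hi) Lt), (zsum_eq0_nonneg F _ _ Nn); [lia|]. rewrite Z2Nat.id; lia.
    + intros [_ B]. rewrite zsum_eq0; [ring|]. intros j Hj.
      apply (proj1 (Fspec j (Range j Hj)) Lt), B, Range, Hj.
  - rewrite Z.sgn_neg by lia.
    pose proof (zsum_nonpos F _ _ (fun j Hj => proj2 (Fspec j (Range j Hj)) ltac:(lia))). lia.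
Qed.

Lemma top_some (a b : Z) (u : Z -> Z) : okd k a b -> inW k u -> admissible u a b ->
  top k a b (Some u) = Some (fun j => u (tr k a b j)).
Proof.
  intros Hd Hu [Hs HB]. unfold top.
  destruct (excluded_middle_informative (top_cond k a b u)) as [_|C]; [reflexivity|].
  exfalso. apply C. split; [|assumption].
  apply length_up_iff, inv_count_up_iff; auto using inW_periodic, inW_injective.
  split; [lia|assumption].
Qed.

Lemma top_none (a b : Z) (u : Z -> Z) : okd k a b -> inW k u -> ~ admissible u a b ->
  top k a b (Some u) = None.
Proof.
  intros Hd Hu C. unfold top.
  destruct (excluded_middle_informative (top_cond k a b u)) as [[Hl Hs]|_]; [|reflexivity].
  exfalso. apply C. split; [assumption|].
  apply length_up_iff, inv_count_up_iff in Hl; auto using inW_periodic, inW_injective. tauto.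
Qed.

Lemma top2_some (a1 b1 a2 b2 : Z) (u : Z -> Z) : okd k a1 b1 -> okd k a2 b2 -> inW k u ->
  admissible u a1 b1 -> admissible (fun j => u (tr k a1 b1 j)) a2 b2 ->
  top k a2 b2 (top k a1 b1 (Some u)) = Some (fun j => u (tr k a1 b1 (tr k a2 b2 j))).
Proof. intros. rewrite !top_some; auto using inW_tr. Qed.

Lemma top2_none (a1 b1 a2 b2 : Z) (u : Z -> Z) : okd k a1 b1 -> okd k a2 b2 -> inW k u ->
  ~ (admissible u a1 b1 /\ admissible (fun j => u (tr k a1 b1 j)) a2 b2) ->
  top k a2 b2 (top k a1 b1 (Some u)) = None.
Proof.
  intros. destruct (classic (admissible u a1 b1)).
  - rewrite top_some, top_none; auto using inW_tr.
  - now rewrite top_none.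
Qed.

Lemma top3_some (a1 b1 a2 b2 a3 b3 : Z) (u : Z -> Z) :
  okd k a1 b1 -> okd k a2 b2 -> okd k a3 b3 -> inW k u ->
  admissible u a1 b1 -> admissible (fun j => u (tr k a1 b1 j)) a2 b2 ->
  admissible (fun j => u (tr k a1 b1 (tr k a2 b2 j))) a3 b3 ->
  top k a3 b3 (top k a2 b2 (top k a1 b1 (Some u)))
  = Some (fun j => u (tr k a1 b1 (tr k a2 b2 (tr k a3 b3 j)))).
Proof. intros. rewrite top2_some, top_some; auto using inW_tr2. Qed.

Lemma top3_none (a1 b1 a2 b2 a3 b3 : Z) (u : Z -> Z) :
  okd k a1 b1 -> okd k a2 b2 -> okd k a3 b3 -> inW k u ->
  ~ (admissible u a1 b1 /\ admissible (fun j => u (tr k a1 b1 j)) a2 b2 /\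
     admissible (fun j => u (tr k a1 b1 (tr k a2 b2 j))) a3 b3) ->
  top k a3 b3 (top k a2 b2 (top k a1 b1 (Some u))) = None.
Proof.
  intros. destruct (classic (admissible u a1 b1 /\ admissible (fun j => u (tr k a1 b1 j)) a2 b2))
    as [[]|].
  - rewrite top2_some, top_none; auto using inW_tr2.
  - now rewrite top2_none.
Qed.

Lemma top_braid_zero (a b c : Z) (u : Z -> Z) : inW k u -> a < b < c -> c - a <= k ->
  top k b c (top k a b (top k b c (Some u))) = None /\
  top k a b (top k b c (top k a b (Some u))) = None.
Proof.
  intros Hu Habc Hca. split; apply top3_none; try okd_tac.
  - intros ([[Ub _] _] & _ & [[_ Wc] _]). tr_simpl_in Wc. lia.
  - intros ([[_ Ub] _] & _ & [[Wa _] _]). tr_simpl_in Wa. lia.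
Qed.

Lemma top_res_zero (a b c d : Z) (u : Z -> Z) : inW k u -> okd k a b -> okd k c d ->
  (res k a = res k c /\ b <= d) \/ (res k b = res k d /\ c <= a) ->
  top k c d (top k a b (Some u)) = None.
Proof.
  intros Hu Hab Hcd H. unfold res, okd in *. apply top2_none; auto.
  pose proof (periodic_mul u (inW_periodic u Hu)) as Pu.
  intros ([[Ua Ub] _] & [[Vc Vd] _]).
  destruct H as [[E F]|[E F]]; destruct (mod_eq_ex (k+1) _ _ ltac:(lia) (eq_sym E)) as [m ->].
  - assert (0 <= m) by nia. tr_simpl_in Vc. rewrite Pu in Vc. nia.
  - assert (m <= 0) by nia. tr_simpl_in Vd. rewrite Pu in Vd. nia.
Qed.

Lemma inW0_lt (u : Z -> Z) (i j : Z) : inW0 k u -> 1 <= u i -> u i < u j -> u j <= k+1 -> i < j.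
Proof.
  intros [(_ & Surj & _) Ord] Hi Hij Hj.
  assert (Steps : forall (d : nat) i j,
            1 <= u i -> u j = u i + Z.of_nat d + 1 -> u j <= k+1 -> i < j).
  { induction d as [|d IH]; intros i' j' G1 G2 G3.
    - apply Ord; lia.
    - destruct (Surj (u i' + Z.of_nat d + 1)) as [m Hm].
      assert (i' < m) by (apply IH; lia).
      assert (m < j') by (apply Ord; lia). lia. }
  apply (Steps (Z.to_nat (u j - u i - 1))); lia.
Qed.

Lemma top_crossing_zero (a b c d : Z) (u : Z -> Z) : inW0 k u -> okd k a b -> okd k c d ->
  (a < c /\ c < b /\ b < d) \/ (b = c /\ d - a > k + 1) ->
  top k c d (top k a b (Some u)) = None /\ top k a b (top k c d (Some u)) = None.
Proof.
  intros Hu0 Hab Hcd H. pose proof (proj1 Hu0) as Hu. unfold okd in Hab, Hcd.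
  pose proof (periodic_mul u (inW_periodic u Hu)) as Pu.
  split; apply top2_none; try okd_tac;
    intros ([[Ua Ub] B1] & [[Vc Vd] B2]); destruct H as [(H1 & H2 & H3)|[-> H1]].
  - specialize (B1 c ltac:(lia)). specialize (B2 b ltac:(lia)).
    revert Vc Vd B2. tr_simpl. lia.
  - (* The only place where u grassmannian is used: it forces d < a + k + 1 here. *)
    specialize (B1 (d + -1 * (k+1)) ltac:(lia)). specialize (B2 (a + 1 * (k+1)) ltac:(lia)).
    revert Vc Vd B2. tr_simpl. rewrite !Pu in *.
    intros. enough (d < a + 1 * (k+1)) by lia.
    apply (inW0_lt u); auto; rewrite ?Pu; lia.
  - specialize (B1 b ltac:(lia)). specialize (B2 c ltac:(lia)).
    revert Vc Vd B2. tr_simpl. lia.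
  - specialize (B1 (a + 1 * (k+1)) ltac:(lia)). specialize (B2 (d + -1 * (k+1)) ltac:(lia)).
    revert Vc Vd B2. tr_simpl. rewrite !Pu in *.
    intros. enough (d < a + 1 * (k+1)) by lia.
    apply (inW0_lt u); auto; rewrite ?Pu; lia.
Qed.

Lemma top2_congr (a1 b1 a2 b2 c1 d1 c2 d2 : Z) (u : Z -> Z) :
  okd k a1 b1 -> okd k a2 b2 -> okd k c1 d1 -> okd k c2 d2 -> inW k u ->
  (forall j, tr k a1 b1 (tr k a2 b2 j) = tr k c1 d1 (tr k c2 d2 j)) ->
  (admissible u a1 b1 /\ admissible (fun j => u (tr k a1 b1 j)) a2 b2 <->
   admissible u c1 d1 /\ admissible (fun j => u (tr k c1 d1 j)) c2 d2) ->
  top k a2 b2 (top k a1 b1 (Some u)) = top k c2 d2 (top k c1 d1 (Some u)).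
Proof.
  intros H1 H2 H3 H4 Hu Ef Ec.
  destruct (classic (admissible u a1 b1 /\ admissible (fun j => u (tr k a1 b1 j)) a2 b2)) as [[]|C].
  - rewrite !top2_some by (auto; apply Ec; auto). f_equal.
    apply functional_extensionality. intros j. now rewrite Ef.
  - rewrite !top2_none by (auto; rewrite <- Ec; auto). reflexivity.
Qed.

Lemma top3_congr (a1 b1 a2 b2 a3 b3 c1 d1 c2 d2 c3 d3 : Z) (u : Z -> Z) :
  okd k a1 b1 -> okd k a2 b2 -> okd k a3 b3 -> okd k c1 d1 -> okd k c2 d2 -> okd k c3 d3 ->
  inW k u ->
  (forall j, tr k a1 b1 (tr k a2 b2 (tr k a3 b3 j)) = tr k c1 d1 (tr k c2 d2 (tr k c3 d3 j))) ->
  (admissible u a1 b1 /\ admissible (fun j => u (tr k a1 b1 j)) a2 b2 /\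
     admissible (fun j => u (tr k a1 b1 (tr k a2 b2 j))) a3 b3 <->
   admissible u c1 d1 /\ admissible (fun j => u (tr k c1 d1 j)) c2 d2 /\
     admissible (fun j => u (tr k c1 d1 (tr k c2 d2 j))) c3 d3) ->
  top k a3 b3 (top k a2 b2 (top k a1 b1 (Some u)))
  = top k c3 d3 (top k c2 d2 (top k c1 d1 (Some u))).
Proof.
  intros H1 H2 H3 H4 H5 H6 Hu Ef Ec.
  destruct (classic (admissible u a1 b1 /\ admissible (fun j => u (tr k a1 b1 j)) a2 b2 /\
                     admissible (fun j => u (tr k a1 b1 (tr k a2 b2 j))) a3 b3))
    as [(A1 & A2 & A3)|C].
  - destruct (proj1 Ec (conj A1 (conj A2 A3))) as (C1 & C2 & C3).
    rewrite !top3_some by auto. f_equal.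
    apply functional_extensionality. intros j. now rewrite Ef.
  - rewrite !top3_none by (auto; rewrite <- Ec; auto). reflexivity.
Qed.

Lemma no_value_between_shift (v : Z -> Z) (x y x' y' m : Z) : periodic k v ->
  x' = x + m * (k+1) -> y' = y + m * (k+1) -> no_value_between v x' y' <-> no_value_between v x y.
Proof.
  intros P Ex Ey.
  assert (Dir : forall x y m, no_value_between v x y ->
                no_value_between v (x + m * (k+1)) (y + m * (k+1))).
  { intros x0 y0 m0 B i Hi. specialize (B (i + (- m0) * (k+1)) ltac:(lia)).
    rewrite !periodic_mul in * by auto. lia. }
  subst. split; [|apply Dir]. intros B.
  replace x with (x + m * (k+1) + (- m) * (k+1)) by ring.
  replace y with (y + m * (k+1) + (- m) * (k+1)) by ring. now apply Dir.
Qed.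

(* t_{b,d} and t_{b-k-1,a} are the same affine transposition. *)
Lemma top_wrap (a b d : Z) (u : Z -> Z) :
  inW k u -> okd k a b -> okd k b d -> okd k (b - k - 1) a -> d - a = k + 1 ->
  top k b d (top k a b (Some u)) = top k (b - k - 1) a (top k a b (Some u)).
Proof.
  intros Hu Hab Hbd Hba Hd. apply top2_congr; auto.
  - intros j. now rewrite (tr_congr b d (b - k - 1) a) by (res_eq || lia).
  - pose proof (inW_periodic u Hu) as P.
    unfold admissible.
    rewrite (no_value_between_shift _ (b - k - 1) a b d 1) by (auto using periodic_tr; lia).
    assert (d = a + 1 * (k+1)) as -> by lia. replace (b - k - 1) with (b + -1 * (k+1)) by ring.
    tr_simpl. rewrite !periodic_mul by auto.
    intuition lia.
Qed.

Lemma top_double_wrap (a b c d : Z) (u : Z -> Z) : inW k u ->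
  okd k a b -> okd k c d -> okd k (d - k - 1) c -> okd k (b - k - 1) a -> b < c ->
  res k b = res k c -> res k d = res k a -> (b - a) + (d - c) = k + 1 ->
  top k c d (top k a b (Some u)) = top k (b - k - 1) a (top k (d - k - 1) c (Some u)).
Proof.
  intros Hu Hab Hcd Hdc Hba Hbc Rbc Rda Hsum. unfold res in *.
  destruct (mod_eq_ex (k+1) c b ltac:(lia) (eq_sym Rbc)) as [p ->].
  assert (Hp : 1 <= p) by (unfold okd in *; nia).
  assert (d = a + (p + 1) * (k+1)) as -> by lia.
  pose proof (inW_periodic u Hu) as P.
  replace (a + (p + 1) * (k+1) - k - 1) with (a + p * (k+1)) by ring.
  replace (b - k - 1) with (b + -1 * (k+1)) by ring.
  assert (Ev : (fun j => u (tr k (a + p * (k+1)) (b + p * (k+1)) j)) = (fun j => u (tr k a b j))).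
  { apply functional_extensionality. intros j. f_equal. apply tr_congr; [res_eq|res_eq|lia]. }
  apply top2_congr; auto; try okd_tac.
  - intros j. rewrite (tr_congr (b + p * (k+1)) _ (b + -1 * (k+1)) a) by (res_eq || lia).
    now rewrite (tr_congr (a + p * (k+1)) _ a b) by (res_eq || lia).
  - rewrite Ev. unfold admissible.
    rewrite (no_value_between_shift u a b (a + p * (k+1)) (b + p * (k+1)) p),
      (no_value_between_shift _ (b + -1 * (k+1)) a (b + p * (k+1)) (a + (p + 1) * (k+1)) (p + 1))
      by (auto using periodic_tr; lia).
    tr_simpl. rewrite !periodic_mul by auto.
    intuition nia.
Qed.

Section DistinctResidues.

Variables (a b c d : Z) (u : Z -> Z).
Hypotheses (Hab : okd k a b) (Hcd : okd k c d) (Pu : periodic k u).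
Hypotheses (Nac : res k a <> res k c) (Nad : res k a <> res k d)
  (Nbc : res k b <> res k c) (Nbd : res k b <> res k d).

Lemma tr_comm_distinct (j : Z) : tr k a b (tr k c d j) = tr k c d (tr k a b j).
Proof.
  unfold res in *. res_case j a. res_case j b. res_case j c. res_case j d. tr_simpl. reflexivity.
Qed.

Lemma no_value_between_comm_cd : u a < u b -> no_value_between u a b ->
  no_value_between (fun j => u (tr k a b j)) c d -> no_value_between u c d.
Proof.
  intros Lab Bab Bv i Hi. unfold no_value_between, res, okd in *.
  pose proof (periodic_mul u Pu) as PM.
  assert (Vc : u (tr k a b c) = u c) by (tr_simpl; reflexivity).
  assert (Vd : u (tr k a b d) = u d) by (tr_simpl; reflexivity).
  rewrite Vc, Vd in Bv.
  destruct (Z.eq_dec (i mod (k+1)) (a mod (k+1))) as [E|Na];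
    [|destruct (Z.eq_dec (i mod (k+1)) (b mod (k+1))) as [E|Nb]];
    try destruct (mod_eq_ex (k+1) _ _ ltac:(lia) E) as [m ->].
  - pose proof (Bv _ Hi) as B1. tr_simpl_in B1. rewrite !PM in *.
    destruct (Z_lt_le_dec (b + m * (k+1)) d).
    + pose proof (Bv (b + m * (k+1)) ltac:(lia)) as B2. tr_simpl_in B2. rewrite PM in B2. lia.
    + pose proof (mod_neq_add _ b d m Nbd).
      pose proof (Bab (d + (- m) * (k+1)) ltac:(lia)) as B2. rewrite PM in B2. lia.
  - pose proof (Bv _ Hi) as B1. tr_simpl_in B1. rewrite !PM in *.
    destruct (Z_lt_le_dec c (a + m * (k+1))).
    + pose proof (Bv (a + m * (k+1)) ltac:(lia)) as B2. tr_simpl_in B2. rewrite PM in B2. lia.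
    + pose proof (mod_neq_add _ a c m Nac).
      pose proof (Bab (c + (- m) * (k+1)) ltac:(lia)) as B2. rewrite PM in B2. lia.
  - pose proof (Bv _ Hi) as B1. now rewrite tr_res_other in B1.
Qed.

Lemma no_value_between_comm_ab : u a < u b -> u c < u d -> no_value_between u a b ->
  no_value_between (fun j => u (tr k a b j)) c d ->
  no_value_between (fun j => u (tr k c d j)) a b.
Proof.
  intros Lab Lcd Bab Bv. pose proof (no_value_between_comm_cd Lab Bab Bv) as Bcd.
  unfold no_value_between, res, okd in *. intros i Hi.
  pose proof (periodic_mul u Pu) as PM.
  assert (Wa : u (tr k c d a) = u a) by (tr_simpl; reflexivity).
  assert (Wb : u (tr k c d b) = u b) by (tr_simpl; reflexivity).
  rewrite Wa, Wb.
  destruct (Z.eq_dec (i mod (k+1)) (c mod (k+1))) as [E|Nc];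
    [|destruct (Z.eq_dec (i mod (k+1)) (d mod (k+1))) as [E|Nd]];
    try destruct (mod_eq_ex (k+1) _ _ ltac:(lia) E) as [p ->].
  - pose proof (Bab _ Hi) as B1. tr_simpl. rewrite !PM in *.
    destruct (Z_lt_le_dec (d + p * (k+1)) b).
    + pose proof (Bab (d + p * (k+1)) ltac:(lia)) as B2. rewrite PM in B2. lia.
    + pose proof (mod_neq_add _ d b p (not_eq_sym Nbd)).
      pose proof (Bv (b + (- p) * (k+1)) ltac:(lia)) as B2. tr_simpl_in B2.
      pose proof (Bcd (b + (- p) * (k+1)) ltac:(lia)) as B3. rewrite !PM in *. lia.
  - pose proof (Bab _ Hi) as B1. tr_simpl. rewrite !PM in *.
    destruct (Z_lt_le_dec a (c + p * (k+1))).
    + pose proof (Bab (c + p * (k+1)) ltac:(lia)) as B2. rewrite PM in B2. lia.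
    + pose proof (mod_neq_add _ c a p (not_eq_sym Nac)).
      pose proof (Bv (a + (- p) * (k+1)) ltac:(lia)) as B2. tr_simpl_in B2.
      pose proof (Bcd (a + (- p) * (k+1)) ltac:(lia)) as B3. rewrite !PM in *. lia.
  - rewrite tr_res_other by assumption. now apply Bab.
Qed.

Lemma admissible_comm : admissible u a b -> admissible (fun j => u (tr k a b j)) c d ->
  admissible u c d /\ admissible (fun j => u (tr k c d j)) a b.
Proof.
  intros [Sab Bab] [Scd Bv]. unfold res in *. tr_simpl_in Scd.
  pose proof (no_value_between_comm_ab ltac:(lia) ltac:(lia) Bab Bv).
  pose proof (no_value_between_comm_cd ltac:(lia) Bab Bv).
  unfold admissible. tr_simpl. intuition lia.
Qed.

End DistinctResidues.

Lemma top_comm_distinct (a b c d : Z) (u : Z -> Z) : inW k u -> okd k a b -> okd k c d ->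
  res k a <> res k c -> res k a <> res k d -> res k b <> res k c -> res k b <> res k d ->
  top k c d (top k a b (Some u)) = top k a b (top k c d (Some u)).
Proof.
  intros Hu Hab Hcd Nac Nad Nbc Nbd. pose proof (inW_periodic u Hu) as P.
  apply top2_congr; auto.
  - intros j. now apply tr_comm_distinct.
  - split; intros [A1 A2]; apply admissible_comm; auto using not_eq_sym.
Qed.

Section Braid.

Variables (a b c d : Z) (u : Z -> Z).
Hypotheses (Hab : a < b) (Hbc : b < c) (Hcd : c < d) (Hca : c - a <= k) (Hdb : d - b <= k).

(* [d] may lie in the residue class of [a], hence the case split on [d = a + (k+1)]. *)
Lemma tr_braid_E1 (j : Z) : tr k b c (tr k c d (tr k a c j)) = tr k b d (tr k a b (tr k b c j)).
Proof.
  destruct (Z.eq_dec d (a + 1 * (k+1))) as [->|Nd].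
  - res_case j a. res_case j b. res_case j c. tr_simpl. reflexivity.
  - res_case j a. res_case j b. res_case j c. res_case j d. tr_simpl. reflexivity.
Qed.

Lemma tr_braid_E2 (j : Z) : tr k a c (tr k c d (tr k b c j)) = tr k b c (tr k a b (tr k b d j)).
Proof.
  destruct (Z.eq_dec d (a + 1 * (k+1))) as [->|Nd].
  - res_case j a. res_case j b. res_case j c. tr_simpl. reflexivity.
  - res_case j a. res_case j b. res_case j c. res_case j d. tr_simpl. reflexivity.
Qed.

Lemma admissible_braid_E1 :
  admissible u b c /\ admissible (fun j => u (tr k b c j)) c d /\
    admissible (fun j => u (tr k b c (tr k c d j))) a c <->
  admissible u b d /\ admissible (fun j => u (tr k b d j)) a b /\
    admissible (fun j => u (tr k b d (tr k a b j))) b c.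
Proof.
  assert (Ebc_cd : forall i, c < i < d -> u (tr k b c i) = u i) by (intros; tr_simpl; reflexivity).
  assert (Ebccd_bc : forall i, b < i < c -> u (tr k b c (tr k c d i)) = u i)
    by (intros; tr_simpl; reflexivity).
  assert (Ebccd_ab : forall i, a <= i < b -> u (tr k b c (tr k c d i)) = u (tr k b d i)).
  { intros i Hi. destruct (Z.eq_dec i (d + -1 * (k+1))) as [->|Ni]; tr_simpl; reflexivity. }
  assert (Ebdab_bc : forall i, b < i < c -> u (tr k b d (tr k a b i)) = u i)
    by (intros; tr_simpl; reflexivity).
  unfold admissible, no_value_between. cbv beta.
  rewrite (Ebccd_ab a) by lia. tr_simpl.
  split.
  - intros ([[S1 S2] B1] & [[S3 S4] B2] & [[S5 S6] B3]).
    assert (Hdc : u d < u c) by (specialize (B3 b ltac:(lia)); tr_simpl_in B3; lia).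
    split; [split; [lia|] | split; [split; [lia|] | split; [lia|]]].
    + intros i Hi. destruct (Z_lt_le_dec i c); [specialize (B1 i ltac:(lia)); lia|].
      destruct (Z.eq_dec i c) as [->|]; [lia|].
      specialize (B2 i ltac:(lia)). rewrite Ebc_cd in B2 by lia. lia.
    + intros i Hi. specialize (B3 i ltac:(lia)). rewrite Ebccd_ab in B3 by lia. lia.
    + intros i Hi. rewrite Ebdab_bc by lia.
      specialize (B3 i ltac:(lia)). rewrite Ebccd_bc in B3 by lia.
      specialize (B1 i Hi). lia.
  - intros ([[S1 S2] B1] & [[S3 S4] B2] & [[S5 S6] B3]).
    assert (Hdc : u d < u c) by (specialize (B1 c ltac:(lia)); lia).
    split; [split; [lia|] | split; [split; [lia|] | split; [lia|]]].
    + intros i Hi. specialize (B1 i ltac:(lia)). specialize (B3 i Hi).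
      rewrite Ebdab_bc in B3 by lia. lia.
    + intros i Hi. rewrite Ebc_cd by lia. specialize (B1 i ltac:(lia)). lia.
    + intros i Hi. destruct (Z_lt_le_dec i b).
      { rewrite Ebccd_ab by lia. specialize (B2 i ltac:(lia)). lia. }
      destruct (Z.eq_dec i b) as [->|]; [tr_simpl; lia|].
      rewrite Ebccd_bc by lia. specialize (B3 i ltac:(lia)). rewrite Ebdab_bc in B3 by lia. lia.
Qed.

Lemma admissible_braid_E2 :
  admissible u a c /\ admissible (fun j => u (tr k a c j)) c d /\
    admissible (fun j => u (tr k a c (tr k c d j))) b c <->
  admissible u b c /\ admissible (fun j => u (tr k b c j)) a b /\
    admissible (fun j => u (tr k b c (tr k a b j))) b d.
Proof.
  assert (Ebcab_cd : forall i, c < i <= d -> u (tr k b c (tr k a b i)) = u (tr k a c i)).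
  { intros i Hi. destruct (Z.eq_dec i (a + 1 * (k+1))) as [->|Ni]; tr_simpl; f_equal; lia. }
  assert (Eaccd_bc : forall i, b < i < c -> u (tr k a c (tr k c d i)) = u i)
    by (intros; tr_simpl; reflexivity).
  assert (Ebc_ab : forall i, a < i < b -> u (tr k b c i) = u i) by (intros; tr_simpl; reflexivity).
  assert (Ebcab_bc : forall i, b < i < c -> u (tr k b c (tr k a b i)) = u i)
    by (intros; tr_simpl; reflexivity).
  unfold admissible, no_value_between. cbv beta.
  rewrite (Ebcab_cd d) by lia. tr_simpl.
  split.
  - intros ([[S1 S2] B1] & [[S3 S4] B2] & [[S5 S6] B3]).
    assert (Hba : u b < u a) by (specialize (B1 b ltac:(lia)); lia).
    split; [split; [lia|] | split; [split; [lia|] | split; [lia|]]].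
    + intros i Hi. specialize (B1 i ltac:(lia)). specialize (B3 i Hi).
      rewrite Eaccd_bc in B3 by lia. lia.
    + intros i Hi. rewrite Ebc_ab by lia. specialize (B1 i ltac:(lia)). lia.
    + intros i Hi. destruct (Z_lt_le_dec i c).
      * rewrite Ebcab_bc by lia. specialize (B3 i ltac:(lia)). rewrite Eaccd_bc in B3 by lia. lia.
      * destruct (Z.eq_dec i c) as [->|]; [tr_simpl; lia|].
        rewrite Ebcab_cd by lia. specialize (B2 i ltac:(lia)). lia.
  - intros ([[S1 S2] B1] & [[S3 S4] B2] & [[S5 S6] B3]).
    assert (Hba : u b < u a) by (specialize (B3 c ltac:(lia)); tr_simpl_in B3; lia).
    split; [split; [lia|] | split; [split; [lia|] | split; [lia|]]].
    + intros i Hi. destruct (Z_lt_le_dec i b).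
      * specialize (B2 i ltac:(lia)). rewrite Ebc_ab in B2 by lia. lia.
      * destruct (Z.eq_dec i b) as [->|]; [lia|]. specialize (B1 i ltac:(lia)). lia.
    + intros i Hi. specialize (B3 i ltac:(lia)). rewrite Ebcab_cd in B3 by lia. lia.
    + intros i Hi. rewrite Eaccd_bc by lia. specialize (B1 i Hi). specialize (B3 i ltac:(lia)).
      rewrite Ebcab_bc in B3 by lia. lia.
Qed.

End Braid.

Lemma top_braid_E1 (a b c d : Z) (u : Z -> Z) : inW k u -> a < b -> b < c -> c < d ->
  c - a <= k -> d - b <= k ->
  top k a c (top k c d (top k b c (Some u))) = top k b c (top k a b (top k b d (Some u))).
Proof.
  intros. apply top3_congr; try okd_tac.
  - now apply tr_braid_E1.
  - now apply admissible_braid_E1.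
Qed.

Lemma top_braid_E2 (a b c d : Z) (u : Z -> Z) : inW k u -> a < b -> b < c -> c < d ->
  c - a <= k -> d - b <= k ->
  top k b c (top k c d (top k a c (Some u))) = top k b d (top k a b (top k b c (Some u))).
Proof.
  intros. apply top3_congr; try okd_tac.
  - now apply tr_braid_E2.
  - now apply admissible_braid_E2.
Qed.

End AffinePermutations.

Theorem mainTheorem1 :
  forall (k : Z), 1 <= k ->
  forall (u : Z -> Z), inW0 k u ->
  (forall a b c d, okd k a b -> okd k c d ->
     res k a <> res k b -> res k a <> res k c -> res k a <> res k d ->
     res k b <> res k c -> res k b <> res k d -> res k c <> res k d ->
     top k c d (top k a b (Some u)) = top k a b (top k c d (Some u))) /\
  (forall a b c d, okd k a b -> okd k c d ->
     ((a < c /\ c < b /\ b < d) \/ (b = c /\ d - a > k + 1)) ->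
     top k c d (top k a b (Some u)) = top k a b (top k c d (Some u)) /\
     top k a b (top k c d (Some u)) = None) /\
  (forall a b c d, okd k a b -> okd k c d ->
     ((res k a = res k c /\ b <= d) \/ (res k b = res k d /\ c <= a)) ->
     top k c d (top k a b (Some u)) = None) /\
  (forall a b d, okd k a b -> okd k b d -> okd k (b - k - 1) a ->
     a < b -> b < d -> d - a = k + 1 ->
     top k b d (top k a b (Some u)) = top k (b - k - 1) a (top k a b (Some u))) /\
  (forall a b c d, okd k a b -> okd k c d -> okd k (d - k - 1) c -> okd k (b - k - 1) a ->
     a < b -> b < c -> c < d -> res k b = res k c -> res k d = res k a ->
     (b - a) + (d - c) = k + 1 ->
     top k c d (top k a b (Some u)) = top k (b - k - 1) a (top k (d - k - 1) c (Some u))) /\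
  (forall a b c d, okd k b c -> okd k c d -> okd k a c -> okd k b d -> okd k a b ->
     a < b -> b < c -> c < d -> c - a <= k -> d - b <= k ->
     top k a c (top k c d (top k b c (Some u)))
       = top k b c (top k a b (top k b d (Some u)))) /\
  (forall a b c d, okd k a c -> okd k c d -> okd k b c -> okd k a b -> okd k b d ->
     a < b -> b < c -> c < d -> c - a <= k -> d - b <= k ->
     top k b c (top k c d (top k a c (Some u)))
       = top k b d (top k a b (top k b c (Some u)))) /\
  (forall a b c, okd k a b -> okd k b c ->
     a < b -> b < c -> c - a < k + 1 ->
     top k b c (top k a b (top k b c (Some u)))
       = top k a b (top k b c (top k a b (Some u))) /\
     top k a b (top k b c (top k a b (Some u))) = None).
Proof.
  intros k Hk u Hu0. pose proof (proj1 Hu0) as Hu.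
  split; [|split; [|split; [|split; [|split; [|split; [|split]]]]]].
  - intros. now apply top_comm_distinct.
  - intros a b c d Hab Hcd H. now destruct (top_crossing_zero k Hk a b c d u) as [-> ->].
  - intros. now apply top_res_zero.
  - intros. now apply top_wrap.
  - intros. now apply top_double_wrap.
  - intros. now apply top_braid_E1.
  - intros. now apply top_braid_E2.
  - intros a b c Hab Hbc H1 H2 H3.
    now destruct (top_braid_zero k Hk a b c u Hu ltac:(lia) ltac:(lia)) as [-> ->].
Qed.
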